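(* Let $\mathcal F=\{F^c_{t,k}\}$ be an F-system and $R,\lambda$ reals such that $|F^A_t\cup F^B_t|\le Rt+\lambda$ for every positive integer $t$. Then for every positive integer $t$, $|S_{2t,t}|\ge(6-4R)t-2\lambda$.
   Context: F-system: a family $\mathcal F=\{F^c_{t,k}\}$ of sets of positive integers, indexed by $c\in\{A,B\}$ and integers $0<k\le t$, such that (F1) $|F^c_{t,k}|\ge k$ for all $c,t,k$; and (F2) $F^A_{t,k}\cap F^B_{t',k'}=\emptyset$ for all $k\le t$, $k'\le t'$ with $k+k'\le\max(t,t')$. Notation: $F^c_t=\bigcup_{0<\kappa\le\tau\le t}F^c_{\tau,\kappa}$ for $c\in\{A,B\}$; $S_t=F^A_t\cap F^B_t$; $S_{2t,t}=S_{2t}\cap(F^A_{2t,t}\cup F^B_{2t,t})$. *)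

From Stdlib Require Import Reals Lra Lia Arith List.
Open Scope R_scope.

Inductive color := cA | cB.

(* A Ffamily F c t k, read as the set F^c_{t,k} (x belongs iff F c t k x).
   Only indices with 0 < k <= t are meaningful. *)
Definition Ffamily := color -> nat -> nat -> nat -> Prop.

Definition card_ge (P : nat -> Prop) (n : nat) : Prop :=
  exists l : list nat, NoDup l /\ (n <= length l)%nat /\ (forall x, In x l -> P x).

(* |P| <= r (r real): every finite list of distinct elements of P has length <= r
   (in particular P is finite). *)
Definition card_le_R (P : nat -> Prop) (r : R) : Prop :=
  forall l : list nat, NoDup l -> (forall x, In x l -> P x) -> INR (length l) <= r.

Definition card_ge_R (P : nat -> Prop) (r : R) : Prop :=
  exists l : list nat, NoDup l /\ (forall x, In x l -> P x) /\ r <= INR (length l).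

Definition F_system (F : Ffamily) : Prop :=
  (forall c t k x, (0 < k <= t)%nat -> F c t k x -> (0 < x)%nat) /\
  (forall c t k, (0 < k <= t)%nat -> card_ge (F c t k) k) /\
  (forall t k t' k', (0 < k <= t)%nat -> (0 < k' <= t')%nat ->
     (k + k' <= Nat.max t t')%nat ->
     forall x, F cA t k x -> F cB t' k' x -> False).

Definition Fc (F : Ffamily) (c : color) (t : nat) (x : nat) : Prop :=
  exists tau kappa, (0 < kappa <= tau)%nat /\ (tau <= t)%nat /\ F c tau kappa x.

Definition S (F : Ffamily) (t : nat) (x : nat) : Prop :=
  Fc F cA t x /\ Fc F cB t x.

Definition S2 (F : Ffamily) (t : nat) (x : nat) : Prop :=
  S F (2 * t) x /\ (F cA (2 * t)%nat t x \/ F cB (2 * t)%nat t x).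

From Stdlib Require Import Reals Lra Lia Arith List.
Open Scope R_scope.

(* Take t-element subsets of F^A_{2t,t} and F^B_{2t,t} and
   2t-element subsets of F^A_{2t,2t} and F^B_{2t,2t}; their sizes add up to at
   least 6t, and all four lie in F^A_{2t} ∪ F^B_{2t}, of size at most 2Rt + λ.
   By (F2) the first two are disjoint, so a point lies in at most three of the
   four subsets, and a point lying in three of them is in S_{2t,t}.  Counting
   with multiplicity, 6t <= 2 |F^A_{2t} ∪ F^B_{2t}| + |S_{2t,t}|. *)

Definition mem_ind (l : list nat) (x : nat) : nat :=
  if in_dec Nat.eq_dec x l then 1%nat else 0%nat.

Lemma list_sum_map_add (g h : nat -> nat) (L : list nat) :
  list_sum (map (fun x => g x + h x)%nat L) =
  (list_sum (map g L) + list_sum (map h L))%nat.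
Proof. induction L as [|a L IH]; simpl; lia. Qed.

Lemma length_le_sum_mem_ind (l L : list nat) :
  NoDup l -> incl l L -> (length l <= list_sum (map (mem_ind l) L))%nat.
Proof.
  intros Hl HlL.
  assert (Hfilter :
    length (filter (fun x => if in_dec Nat.eq_dec x l then true else false) L) =
    list_sum (map (mem_ind l) L)).
  { clear HlL. induction L as [|a L IH]; simpl; auto.
    unfold mem_ind at 1; destruct (in_dec Nat.eq_dec a l); simpl; lia. }
  rewrite <- Hfilter. apply NoDup_incl_length; auto.
  intros x Hx. apply filter_In. split; auto.
  destruct (in_dec Nat.eq_dec x l); tauto.
Qed.

Lemma list_sum_map_le_count_top (b : nat) (g : nat -> nat) (L : list nat) :
  (forall x, In x L -> g x <= b + 1)%nat ->
  (list_sum (map g L) <= b * length L + length (filter (fun x => b + 1 <=? g x) L))%nat.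
Proof.
  induction L as [|a L IH]; intros Hg; simpl; [lia|].
  pose proof (Hg a (or_introl eq_refl)) as Ha.
  pose proof (IH (fun x Hx => Hg x (or_intror Hx))) as IH'.
  destruct (b + 1 <=? g a) eqn:E; simpl;
    [apply Nat.leb_le in E | apply Nat.leb_nle in E]; lia.
Qed.

Lemma four_lists_count (l1 l2 l3 l4 : list nat) :
  NoDup l1 -> NoDup l2 -> NoDup l3 -> NoDup l4 ->
  (forall x, In x l1 -> In x l2 -> False) ->
  exists M, NoDup M /\
    (forall x, In x M ->
       (In x l1 \/ In x l3) /\ (In x l2 \/ In x l4) /\ (In x l1 \/ In x l2)) /\
    (length l1 + length l2 + length l3 + length l4 <=
       2 * length (nodup Nat.eq_dec (l1 ++ l2 ++ l3 ++ l4)) + length M)%nat.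
Proof.
  intros N1 N2 N3 N4 Hdisj.
  set (L := nodup Nat.eq_dec (l1 ++ l2 ++ l3 ++ l4)).
  set (g := fun x => (mem_ind l1 x + mem_ind l2 x + (mem_ind l3 x + mem_ind l4 x))%nat).
  exists (filter (fun x => 3 <=? g x)%nat L). split; [|split].
  - apply NoDup_filter, NoDup_nodup.
  - intros x Hx. apply filter_In in Hx as [_ Hx]. revert Hx.
    unfold g, mem_ind.
    destruct (in_dec Nat.eq_dec x l1), (in_dec Nat.eq_dec x l2),
      (in_dec Nat.eq_dec x l3), (in_dec Nat.eq_dec x l4);
      cbn; intros Hx; try discriminate; tauto.
  - assert (Hincl : forall l, incl l (l1 ++ l2 ++ l3 ++ l4) -> incl l L).
    { intros l Hl x Hx. apply nodup_In, Hl, Hx. }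
    pose proof (length_le_sum_mem_ind l1 L N1
      (Hincl l1 ltac:(intros x; rewrite !in_app_iff; tauto))) as E1.
    pose proof (length_le_sum_mem_ind l2 L N2
      (Hincl l2 ltac:(intros x; rewrite !in_app_iff; tauto))) as E2.
    pose proof (length_le_sum_mem_ind l3 L N3
      (Hincl l3 ltac:(intros x; rewrite !in_app_iff; tauto))) as E3.
    pose proof (length_le_sum_mem_ind l4 L N4
      (Hincl l4 ltac:(intros x; rewrite !in_app_iff; tauto))) as E4.
    assert (Hg3 : forall x, In x L -> (g x <= 3)%nat).
    { intros x _. unfold g, mem_ind.
      destruct (in_dec Nat.eq_dec x l1), (in_dec Nat.eq_dec x l2),
        (in_dec Nat.eq_dec x l3), (in_dec Nat.eq_dec x l4);
        try lia; exfalso; eauto. }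
    pose proof (list_sum_map_le_count_top 2 g L Hg3) as Hsum.
    assert (Hsplit : list_sum (map g L) =
      (list_sum (map (mem_ind l1) L) + list_sum (map (mem_ind l2) L) +
       (list_sum (map (mem_ind l3) L) + list_sum (map (mem_ind l4) L)))%nat).
    { unfold g. rewrite !list_sum_map_add. reflexivity. }
    change (2 + 1)%nat with 3%nat in Hsum. lia.
Qed.

Lemma F_in_Fc (F : Ffamily) (c : color) (t tau k x : nat) :
  F c tau k x -> (0 < k <= tau)%nat -> (tau <= t)%nat -> Fc F c t x.
Proof. intros Hx Hk Ht. exists tau, k. auto. Qed.

Theorem lemma3 (F : Ffamily) (r lam : R) :
  F_system F ->
  (forall t : nat, (0 < t)%nat ->
     card_le_R (fun x => Fc F cA t x \/ Fc F cB t x) (r * INR t + lam)) ->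
  forall t : nat, (0 < t)%nat ->
    card_ge_R (S2 F t) ((6 - 4 * r) * INR t - 2 * lam).
Proof.
  intros [_ [HF1 HF2]] HU t Ht.
  destruct (HF1 cA (2 * t)%nat t ltac:(lia)) as [l1 [N1 [L1 I1]]].
  destruct (HF1 cB (2 * t)%nat t ltac:(lia)) as [l2 [N2 [L2 I2]]].
  destruct (HF1 cA (2 * t)%nat (2 * t)%nat ltac:(lia)) as [l3 [N3 [L3 I3]]].
  destruct (HF1 cB (2 * t)%nat (2 * t)%nat ltac:(lia)) as [l4 [N4 [L4 I4]]].
  assert (Hdisj : forall x, In x l1 -> In x l2 -> False).
  { intros x H1 H2.
    apply (HF2 (2 * t)%nat t (2 * t)%nat t) with x; [lia | lia | lia | auto | auto]. }
  destruct (four_lists_count l1 l2 l3 l4 N1 N2 N3 N4 Hdisj) as [M [NM [HM Hcount]]].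
  assert (Hunion :
    INR (length (nodup Nat.eq_dec (l1 ++ l2 ++ l3 ++ l4))) <= r * INR (2 * t) + lam).
  { apply HU; [lia | apply NoDup_nodup |].
    intros x Hx. apply nodup_In in Hx. rewrite !in_app_iff in Hx.
    destruct Hx as [Hx|[Hx|[Hx|Hx]]].
    - left. apply (F_in_Fc F cA _ (2 * t) t x); auto; lia.
    - right. apply (F_in_Fc F cB _ (2 * t) t x); auto; lia.
    - left. apply (F_in_Fc F cA _ (2 * t) (2 * t) x); auto; lia.
    - right. apply (F_in_Fc F cB _ (2 * t) (2 * t) x); auto; lia. }
  exists M. split; [exact NM | split].
  - intros x Hx. destruct (HM x Hx) as [[HA|HA] [[HB|HB] [HS|HS]]].
    all: split; [split|].
    all: first [ apply (F_in_Fc F _ _ (2 * t) t x); auto; lia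
               | apply (F_in_Fc F _ _ (2 * t) (2 * t) x); auto; lia
               | left; now auto | right; now auto ].
  - assert (H6t : (6 * t <= 2 * length (nodup Nat.eq_dec (l1 ++ l2 ++ l3 ++ l4))
                   + length M)%nat) by lia.
    apply le_INR in H6t. rewrite plus_INR, !mult_INR in H6t.
    rewrite mult_INR in Hunion. simpl in H6t, Hunion. lra.
Qed.
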